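(* Let $X$ be a geodesically complete locally compact CAT(0)-space and let $a\colon\mathbb R\to X$ be a complete geodesic. Then the sets $\omega^+(a)$ and $\omega^-(a)$ are at most countable.
   Context: $\Sigma_xX$ is the space of directions at $x$ (with the Alexandrov angle metric $\angle_x$); directions $\xi,\eta\in\Sigma_xX$ are mutually inverse if $\angle_x(\xi,\eta)=\pi$. $\omega^+(a)$ is the set of points $x\in a$ such that the direction at $x$ of the ray $[x\,a(+\infty)]$ has more than one inverse direction in $\Sigma_xX$; $\omega^-(a)$ is the set of points $x\in a$ such that the direction of the ray $[x\,a(-\infty)]$ has more than one inverse direction. *)

From Stdlib Require Import Reals.
From Coquelicot Require Import Coquelicot.
Open Scope R_scope.

Section Defs.
Context {X : Type} (d : X -> X -> R).

Definition is_metric : Prop :=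
  (forall x y, 0 <= d x y) /\ (forall x y, d x y = 0 <-> x = y) /\
  (forall x y, d x y = d y x) /\ (forall x y z, d x z <= d x y + d y z).

Definition geodesic_segment (c : R -> X) (a b : R) : Prop :=
  a <= b /\ forall s t, a <= s <= b -> a <= t <= b -> d (c s) (c t) = Rabs (s - t).

Definition geodesic_line (c : R -> X) : Prop :=
  forall s t, d (c s) (c t) = Rabs (s - t).

Definition geodesic_space : Prop :=
  forall x y, exists c, geodesic_segment c 0 (d x y) /\ c 0 = x /\ c (d x y) = y.

(** CAT(0): geodesic metric space satisfying the CN inequality of Bruhat--Tits
    for every point of every geodesic segment (equivalent to the CAT(0)
    triangle comparison condition, Bridson--Haefliger II.1.9). *)
Definition CAT0 : Prop :=
  is_metric /\ geodesic_space /\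
  forall x y z (c : R -> X),
    geodesic_segment c 0 (d y z) -> c 0 = y -> c (d y z) = z ->
    forall t, 0 <= t <= 1 ->
      (d x (c (t * d y z)))^2 <=
        (1 - t) * (d x y)^2 + t * (d x z)^2 - t * (1 - t) * (d y z)^2.

Definition geodesically_complete : Prop :=
  forall (c : R -> X) a b, a < b -> geodesic_segment c a b ->
    exists c', geodesic_line c' /\ forall t, a <= t <= b -> c' t = c t.

Definition locally_compact : Prop :=
  forall x, exists r, 0 < r /\
    forall u : nat -> X, (forall n, d x (u n) <= r) ->
      exists (phi : nat -> nat) (y : X),
        (forall n, (phi n < phi (S n))%nat) /\ d x y <= r /\
        is_lim_seq (fun n => d (u (phi n)) y) 0.

Definition geod_from (x : X) (c : R -> X) : Prop :=
  c 0 = x /\ exists eps, 0 < eps /\ geodesic_segment c 0 eps.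

Definition cmp_angle (c c' : R -> X) (s t : R) : R :=
  acos ((s ^ 2 + t ^ 2 - (d (c s) (c' t)) ^ 2) / (2 * s * t)).

Definition sup_cmp (c c' : R -> X) (delta : R) : R :=
  real (Lub_Rbar (fun v => exists s t, 0 < s < delta /\ 0 < t < delta /\
                                       v = cmp_angle c c' s t)).

Definition alex_angle (c c' : R -> X) : R :=
  real (Glb_Rbar (fun u => exists delta, 0 < delta /\ u = sup_cmp c c' delta)).

(** A point of Sigma_x X (the metric completion of the space of geodesic
    directions modulo angle 0) is represented by an angle-Cauchy sequence of
    geodesic germs at x. *)
Definition angle_cauchy (eta : nat -> R -> X) : Prop :=
  forall e, 0 < e -> exists N, forall m n, (N <= m)%nat -> (N <= n)%nat ->
    alex_angle (eta m) (eta n) < e.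

Definition direction_seq (x : X) (eta : nat -> R -> X) : Prop :=
  (forall n, geod_from x (eta n)) /\ angle_cauchy eta.

(** the direction xi (a geodesic germ at x) has more than one inverse
    direction in Sigma_x X *)
Definition multiple_inverses (x : X) (xi : R -> X) : Prop :=
  exists eta1 eta2 : nat -> R -> X,
    direction_seq x eta1 /\ direction_seq x eta2 /\
    is_lim_seq (fun n => alex_angle xi (eta1 n)) PI /\
    is_lim_seq (fun n => alex_angle xi (eta2 n)) PI /\
    ~ is_lim_seq (fun n => alex_angle (eta1 n) (eta2 n)) 0.

(** for x = a t0, the ray [x a(+oo)] is t |-> a (t0 + t),
    the ray [x a(-oo)] is t |-> a (t0 - t) *)
Definition omega_plus (a : R -> X) (x : X) : Prop :=
  exists t0, x = a t0 /\ multiple_inverses x (fun t => a (t0 + t)).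

Definition omega_minus (a : R -> X) (x : X) : Prop :=
  exists t0, x = a t0 /\ multiple_inverses x (fun t => a (t0 - t)).

End Defs.

Definition at_most_countable {X : Type} (A : X -> Prop) : Prop :=
  exists f : nat -> X, forall x, A x -> exists n, f n = x.

(* At a point [x = a t0] of omega^+(a), two distinct inverse directions of the
   forward ray are both nearly opposite to it but apart from each other, so
   they cannot both be close to the backward ray.  Extending one of them by
   geodesic completeness gives a line [eta] from [x] at angle almost [PI] with
   the forward ray and at angle bounded below (in terms of some [th > 0]) with
   the backward ray.  For fixed [th], the CN inequality shows that the lines
   attached to two such points [a t0], [a t1] with [0 < t1 - t0 <= rho] satisfy
   [d (eta rho) (eta' rho) >= rho * sqrt th]; by local compactness at [a t],
   such points cannot accumulate at [t].  So for each [th = 1/(k+1)] they form a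
   discrete, hence countable, subset of the line.  omega^-(a) is omega^+ of the
   reversed line. *)

From Stdlib Require Import Reals.
From Coquelicot Require Import Coquelicot.
From Stdlib Require Import Psatz Lia ZArith Classical ClassicalEpsilon Cantor FunctionalExtensionality.
Open Scope R_scope.

Lemma acos_antitone x y : x <= y -> acos y <= acos x.
Proof.
  intros Hxy.
  pose proof (acos_bound x); pose proof (acos_bound y).
  destruct (Rle_dec x (-1)) as [Hx|Hx].
  { unfold acos at 2. destruct (Rle_dec x (-1)); lra. }
  destruct (Rle_dec 1 y) as [Hy|Hy].
  { unfold acos at 1. destruct (Rle_dec y (-1)); [lra|]. destruct (Rle_dec 1 y); lra. }
  destruct (Rlt_le_dec (acos x) (acos y)) as [Hlt|]; [|lra].
  pose proof (cos_decreasing_1 (acos x) (acos y)) as Hcos.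
  rewrite !cos_acos in Hcos by lra.
  assert (y < x) by (apply Hcos; lra). lra.
Qed.

Lemma le_acos k th : 0 <= th <= PI -> k <= cos th -> th <= acos k.
Proof.
  intros Hth Hk. rewrite <- (acos_cos th Hth) at 1. now apply acos_antitone.
Qed.

Lemma acos_lt k th : 0 < th <= PI -> cos th < k -> acos k < th.
Proof.
  intros Hth Hk.
  pose proof (COS_bound th).
  assert (Hle : acos k <= th).
  { rewrite <- (acos_cos th) by lra. apply acos_antitone; lra. }
  destruct (Rle_dec 1 k) as [H1|H1].
  { unfold acos. destruct (Rle_dec k (-1)); [lra|]. destruct (Rle_dec 1 k); lra. }
  destruct (Req_dec (acos k) th) as [E|]; [|lra].
  assert (Hck : cos (acos k) = k) by (apply cos_acos; lra).
  rewrite E in Hck. lra.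
Qed.

(* Law of cosines: [acos ((s^2 + t^2 - D^2) / (2 * s * t))] is the angle
   opposite to [D] in a Euclidean triangle with sides [s], [t], [D]. *)
Lemma dist_sq_ge_of_angle_ge s t D th : 0 < s -> 0 < t -> 0 < th <= PI ->
  th <= acos ((s^2 + t^2 - D^2) / (2 * s * t)) -> s^2 + t^2 - 2 * s * t * cos th <= D^2.
Proof.
  intros Hs Ht Hth H.
  assert (Hk : (s^2 + t^2 - D^2) / (2 * s * t) * (2 * s * t) = s^2 + t^2 - D^2)
    by (field; lra).
  assert (Hst : 0 < 2 * s * t) by nra.
  set (k := (s^2 + t^2 - D^2) / (2 * s * t)) in *.
  destruct (Rle_lt_dec k (cos th)) as [Hc|Hc].
  - nra.
  - pose proof (acos_lt _ _ Hth Hc). lra.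
Qed.

Lemma dist_sq_lt_of_angle_lt s t D th : 0 < s -> 0 < t -> 0 <= th <= PI ->
  acos ((s^2 + t^2 - D^2) / (2 * s * t)) < th -> D^2 < s^2 + t^2 - 2 * s * t * cos th.
Proof.
  intros Hs Ht Hth H.
  assert (Hk : (s^2 + t^2 - D^2) / (2 * s * t) * (2 * s * t) = s^2 + t^2 - D^2)
    by (field; lra).
  assert (Hst : 0 < 2 * s * t) by nra.
  set (k := (s^2 + t^2 - D^2) / (2 * s * t)) in *.
  destruct (Rle_lt_dec k (cos th)) as [Hc|Hc].
  - pose proof (le_acos _ _ Hth Hc). lra.
  - nra.
Qed.

Lemma real_Lub_Rbar_spec (E : R -> Prop) hi :
  (exists x, E x) -> (forall x, E x -> x <= hi) ->
  (forall x, E x -> x <= real (Lub_Rbar E)) /\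
  (forall b, (forall x, E x -> x <= b) -> real (Lub_Rbar E) <= b).
Proof.
  intros [x0 Hx0] Hbnd.
  destruct (Lub_Rbar_correct E) as [Hub Hleast].
  assert (Hhi : Rbar_le (Lub_Rbar E) hi) by (apply Hleast; intros x Hx; apply Hbnd, Hx).
  assert (Hx0le : Rbar_le x0 (Lub_Rbar E)) by now apply Hub.
  destruct (Lub_Rbar E) as [l| |]; simpl in *; try contradiction.
  split.
  - intros x Hx. exact (Hub x Hx).
  - intros b Hb. exact (Hleast b Hb).
Qed.

Lemma real_Glb_Rbar_spec (E : R -> Prop) lo :
  (exists x, E x) -> (forall x, E x -> lo <= x) ->
  (forall x, E x -> real (Glb_Rbar E) <= x) /\
  (forall b, (forall x, E x -> b <= x) -> b <= real (Glb_Rbar E)).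
Proof.
  intros [x0 Hx0] Hbnd.
  destruct (Glb_Rbar_correct E) as [Hlb Hgreatest].
  assert (Hlo : Rbar_le lo (Glb_Rbar E)) by (apply Hgreatest; intros x Hx; apply Hbnd, Hx).
  assert (Hlex0 : Rbar_le (Glb_Rbar E) x0) by now apply Hlb.
  destruct (Glb_Rbar E) as [l| |]; simpl in *; try contradiction.
  split.
  - intros x Hx. exact (Hlb x Hx).
  - intros b Hb. exact (Hgreatest b Hb).
Qed.

Lemma not_is_lim_seq_0 (u : nat -> R) : (forall n, 0 <= u n) -> ~ is_lim_seq u 0 ->
  exists e, 0 < e /\ forall N, exists n, (N <= n)%nat /\ e <= u n.
Proof.
  intros Hu Hlim. apply NNPP. intros Hne. apply Hlim.
  apply is_lim_seq_spec. intros e.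
  apply NNPP. intros Hev. apply Hne. exists e. split; [apply cond_pos|].
  intros N. apply NNPP. intros Hfar. apply Hev. exists N. intros n Hn.
  rewrite Rminus_0_r, Rabs_pos_eq by apply Hu.
  destruct (Rle_lt_dec e (u n)); [exfalso; apply Hfar; now exists n|assumption].
Qed.

Lemma is_lim_seq_eventually_gt (u : nat -> R) l c : c < l -> is_lim_seq u l ->
  exists N, forall n, (N <= n)%nat -> c < u n.
Proof.
  intros Hc Hlim. apply is_lim_seq_spec in Hlim.
  destruct (Hlim (mkposreal (l - c) ltac:(lra))) as [N HN].
  exists N. intros n Hn. specialize (HN n Hn). simpl in HN.
  apply Rabs_lt_between in HN. lra.
Qed.

Lemma inv_INR_S_bounds k : 0 < / INR (S k) <= 1.
Proof.
  rewrite S_INR. pose proof (pos_INR k). split.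
  - apply Rinv_0_lt_compat; lra.
  - rewrite <- Rinv_1. apply Rinv_le_contravar; lra.
Qed.

Lemma at_most_countable_sub {X} (A B : X -> Prop) :
  (forall x, A x -> B x) -> at_most_countable B -> at_most_countable A.
Proof. intros HAB [f Hf]. exists f. auto. Qed.

Lemma at_most_countable_image {X Y} (f : Y -> X) (A : Y -> Prop) :
  at_most_countable A -> at_most_countable (fun x => exists y, A y /\ f y = x).
Proof.
  intros [g Hg]. exists (fun n => f (g n)). intros x [y [Hy <-]].
  destruct (Hg y Hy) as [n <-]. now exists n.
Qed.

Lemma at_most_countable_pairs {X} (F : nat -> nat -> X) :
  at_most_countable (fun x => exists i j, F i j = x).
Proof.
  exists (fun n => let (i, j) := Cantor.of_nat n in F i j).
  intros x [i [j <-]]. exists (Cantor.to_nat (i, j)). now rewrite Cantor.cancel_of_to.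
Qed.

Lemma at_most_countable_bigcup {X} (A : nat -> X -> Prop) :
  (forall k, at_most_countable (A k)) -> at_most_countable (fun x => exists k, A k x).
Proof.
  intros HA.
  set (f := fun k => proj1_sig (constructive_indefinite_description _ (HA k))).
  assert (Hf : forall k x, A k x -> exists n, f k n = x)
    by (intros k; exact (proj2_sig (constructive_indefinite_description _ (HA k)))).
  apply (at_most_countable_sub _ (fun x => exists k n, f k n = x)).
  - intros x [k Hk]. exists k. now apply Hf.
  - apply at_most_countable_pairs.
Qed.

Lemma INR_Z_to_nat_sub z : INR (Z.to_nat z) - INR (Z.to_nat (- z)) = IZR z.
Proof.
  destruct z as [|p|p]; simpl.
  - lra.
  - rewrite INR_IZR_INZ, positive_nat_Z. lra.
  - rewrite INR_IZR_INZ, positive_nat_Z, <- Pos2Z.opp_pos, opp_IZR. simpl. lra.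
Qed.

Lemma grid_approx y m : exists j1 j2 : nat,
  Rabs (y - (INR j1 - INR j2) / (INR m + 1)) <= / (INR m + 1).
Proof.
  pose proof (pos_INR m). set (M := INR m + 1).
  destruct (archimed (y * M)) as [Hup1 Hup2].
  exists (Z.to_nat (up (y * M))), (Z.to_nat (- up (y * M))).
  rewrite INR_Z_to_nat_sub.
  replace (y - IZR (up (y * M)) / M) with ((y * M - IZR (up (y * M))) * / M)
    by (field; unfold M; lra).
  rewrite Rabs_mult, Rabs_inv, (Rabs_pos_eq M) by (unfold M; lra).
  assert (Rabs (y * M - IZR (up (y * M))) <= 1) by (apply Rabs_le; lra).
  assert (0 < / M) by (apply Rinv_0_lt_compat; unfold M; lra). nra.
Qed.

Definition isolated_in (S : R -> Prop) (t : R) : Prop :=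
  exists ep, 0 < ep /\ forall t', S t' -> Rabs (t' - t) < ep -> t' = t.

Lemma not_isolated_sequence (A : R -> Prop) t : ~ isolated_in A t ->
  forall r, 0 < r -> exists u : nat -> R,
    (forall n, A (u n) /\ Rabs (u n - t) < r) /\ (forall i j, (i < j)%nat -> u i <> u j).
Proof.
  intros Hnot r Hr.
  assert (Hnear : forall ep, 0 < ep -> exists t', A t' /\ 0 < Rabs (t' - t) < ep).
  { intros ep Hep. apply NNPP. intros Hnone. apply Hnot. exists ep. split; [assumption|].
    intros t' Ht' Hclose. apply NNPP. intros Hne. apply Hnone. exists t'.
    split; [assumption|]. split; [apply Rabs_pos_lt; lra|assumption]. }
  set (pick ep := epsilon (inhabits 0) (fun t' => A t' /\ 0 < Rabs (t' - t) < ep)).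
  assert (Hpick : forall ep, 0 < ep -> A (pick ep) /\ 0 < Rabs (pick ep - t) < ep)
    by (intros ep Hep; apply epsilon_spec, Hnear, Hep).
  set (u := fix u n := match n with O => pick r | S n => pick (Rabs (u n - t)) end).
  assert (Hu : forall n, A (u n) /\ 0 < Rabs (u n - t) < r).
  { induction n as [|n [_ IH]]; [now apply Hpick|].
    destruct (Hpick _ (proj1 IH)) as [HA Hlt].
    change (u (S n)) with (pick (Rabs (u n - t))). split; [assumption|lra]. }
  assert (Hdecr : forall i j, (i < j)%nat -> Rabs (u j - t) < Rabs (u i - t)).
  { intros i j Hij. induction Hij as [|j Hij IH].
    - apply (Hpick _ (proj1 (proj2 (Hu i)))).
    - apply Rlt_trans with (Rabs (u j - t)); [|assumption].
      apply (Hpick _ (proj1 (proj2 (Hu j)))). }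
  exists u. split.
  - intros n. destruct (Hu n) as [HA Hlt]. split; [assumption|lra].
  - intros i j Hij Heq. specialize (Hdecr i j Hij). rewrite Heq in Hdecr. lra.
Qed.

(* Each point of [S] is the chosen point of [S] near some grid point
   [(j1 - j2) / (m + 1)] of mesh smaller than half its isolation radius. *)
Lemma at_most_countable_isolated (S : R -> Prop) :
  (forall t, S t -> isolated_in S t) -> at_most_countable S.
Proof.
  intros Hiso.
  set (near m j1 j2 := fun t => S t /\
         Rabs (t - (INR j1 - INR j2) / (INR m + 1)) <= / (INR m + 1)).
  apply (at_most_countable_sub _
           (fun t => exists m, exists j1 j2, epsilon (inhabits 0) (near m j1 j2) = t)).
  2: { apply at_most_countable_bigcup. intros m. apply at_most_countable_pairs. }
  intros t0 Ht0.
  destruct (Hiso t0 Ht0) as [ep [Hep Ht0_iso]].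
  destruct (archimed_cor1 (ep / 2) ltac:(lra)) as [N [HN HN0]].
  set (m := (N - 1)%nat).
  assert (Hm : INR m + 1 = INR N) by (unfold m; rewrite minus_INR by lia; simpl; lra).
  rewrite <- Hm in HN.
  destruct (grid_approx t0 m) as [j1 [j2 Hj]].
  exists m, j1, j2.
  destruct (epsilon_spec (inhabits 0) (near m j1 j2) (ex_intro _ t0 (conj Ht0 Hj)))
    as [Ht Htj].
  apply Ht0_iso; auto.
  set (t := epsilon _ _) in *.
  replace (t - t0) with ((t - (INR j1 - INR j2) / (INR m + 1))
                         - (t0 - (INR j1 - INR j2) / (INR m + 1))) by ring.
  eapply Rle_lt_trans; [apply Rabs_triang|]. rewrite Rabs_Ropp. lra.
Qed.

Section CAT0_space.

Context {X : Type} (d : X -> X -> R).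

Lemma sup_cmp_spec c c' delta : 0 < delta ->
  0 <= sup_cmp d c c' delta /\
  (forall s t, 0 < s < delta -> 0 < t < delta -> cmp_angle d c c' s t <= sup_cmp d c c' delta) /\
  (forall b, (forall s t, 0 < s < delta -> 0 < t < delta -> cmp_angle d c c' s t <= b) ->
     sup_cmp d c c' delta <= b).
Proof.
  intros Hdelta. unfold sup_cmp.
  set (E := fun v => exists s t, 0 < s < delta /\ 0 < t < delta /\ v = cmp_angle d c c' s t).
  assert (Hmid : E (cmp_angle d c c' (delta / 2) (delta / 2)))
    by (exists (delta / 2), (delta / 2); repeat split; lra).
  destruct (real_Lub_Rbar_spec E PI) as [Hub Hleast].
  - eexists; exact Hmid.
  - intros x [s [t [_ [_ ->]]]]. apply acos_bound.
  - repeat split.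
    + eapply Rle_trans; [apply acos_bound|apply (Hub _ Hmid)].
    + intros s t Hs Ht. apply Hub. now exists s, t.
    + intros b Hb. apply Hleast. intros x [s [t [Hs [Ht ->]]]]. auto.
Qed.

Lemma alex_angle_spec c c' :
  0 <= alex_angle d c c' /\
  (forall delta, 0 < delta -> alex_angle d c c' <= sup_cmp d c c' delta) /\
  (forall b, (forall delta, 0 < delta -> b <= sup_cmp d c c' delta) -> b <= alex_angle d c c').
Proof.
  unfold alex_angle.
  set (E := fun u => exists delta, 0 < delta /\ u = sup_cmp d c c' delta).
  destruct (real_Glb_Rbar_spec E 0) as [Hlb Hgreatest].
  - exists (sup_cmp d c c' 1), 1. split; [lra|reflexivity].
  - intros x [delta [Hdelta ->]]. apply (sup_cmp_spec c c' delta Hdelta).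
  - repeat split.
    + apply Hgreatest. intros x [delta [Hdelta ->]]. apply (sup_cmp_spec c c' delta Hdelta).
    + intros delta Hdelta. apply Hlb. now exists delta.
    + intros b Hb. apply Hgreatest. intros x [delta [Hdelta ->]]. auto.
Qed.

Lemma cmp_angle_lt_of_alex_angle_lt c c' th : alex_angle d c c' < th ->
  exists delta, 0 < delta /\
  forall s t, 0 < s < delta -> 0 < t < delta -> cmp_angle d c c' s t < th.
Proof.
  intros Hlt.
  destruct (alex_angle_spec c c') as [_ [_ Hgreatest]].
  destruct (classic (exists delta, 0 < delta /\ sup_cmp d c c' delta < th))
    as [[delta [Hdelta Hsup]]|Hnone].
  - exists delta. split; [assumption|]. intros s t Hs Ht.
    destruct (sup_cmp_spec c c' delta Hdelta) as [_ [Hub _]].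
    specialize (Hub s t Hs Ht). lra.
  - exfalso. enough (th <= alex_angle d c c') by lra.
    apply Hgreatest. intros delta Hdelta.
    apply Rnot_lt_le. intros Hsup. apply Hnone. now exists delta.
Qed.

Lemma geodesic_segment_restr c S s :
  geodesic_segment d c 0 S -> 0 <= s <= S -> geodesic_segment d c 0 s.
Proof. intros [_ Hc] Hs. split; [lra|]. intros u v Hu Hv. apply Hc; lra. Qed.

Lemma geodesic_line_segment c S :
  geodesic_line d c -> 0 <= S -> geodesic_segment d c 0 S.
Proof. intros Hc HS. split; [lra|]. intros; apply Hc. Qed.

Lemma dist_segment_origin c S s :
  geodesic_segment d c 0 S -> 0 <= s <= S -> d (c 0) (c s) = s.
Proof. intros [_ Hc] Hs. rewrite Hc by lra. rewrite Rabs_left1; lra. Qed.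

Hypothesis hcat : CAT0 d.

Lemma dist_ge0 x y : 0 <= d x y.
Proof. apply (proj1 hcat). Qed.

Lemma dist_sym x y : d x y = d y x.
Proof. apply (proj1 hcat). Qed.

Lemma dist_triangle x y z : d x z <= d x y + d y z.
Proof. apply (proj1 hcat). Qed.

(* The CN inequality at the point [g s'] of the segment [g 0, g s], divided out:
   the cosine of the comparison angle at [g 0] is nonincreasing along [g]. *)
Lemma cn_monotone g S q t s' s :
  geodesic_segment d g 0 S -> d (g 0) q = t -> 0 < s' <= s -> s <= S ->
  s' * (s^2 + t^2 - (d (g s) q)^2) <= s * (s'^2 + t^2 - (d (g s') q)^2).
Proof.
  intros Hg Ht Hs' HsS.
  destruct hcat as [_ [_ CN]].
  assert (Hgs : geodesic_segment d g 0 s) by (apply (geodesic_segment_restr g S); [assumption|lra]).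
  specialize (CN q (g 0) (g s) g).
  rewrite (dist_segment_origin g S s Hg ltac:(lra)) in CN.
  specialize (CN Hgs eq_refl eq_refl (s' / s)).
  assert (Hratio : 0 <= s' / s <= 1).
  { split.
    - apply Rlt_le, Rdiv_lt_0_compat; lra.
    - apply (Rmult_le_reg_r s); [lra|]. field_simplify; lra. }
  specialize (CN Hratio).
  replace (s' / s * s) with s' in CN by (field; lra).
  rewrite (dist_sym q (g 0)), Ht, (dist_sym q (g s)), (dist_sym q (g s')) in CN.
  apply (Rmult_le_compat_l s) in CN; [|lra].
  replace (s * ((1 - s' / s) * t ^ 2 + s' / s * (d (g s) q) ^ 2
               - s' / s * (1 - s' / s) * s ^ 2))
    with ((s - s') * t^2 + s' * (d (g s) q)^2 - s * s' * (s - s')) in CN by (field; lra).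
  nra.
Qed.

Lemma cmp_angle_monotone c c' S T s' s t' t :
  geodesic_segment d c 0 S -> geodesic_segment d c' 0 T -> c 0 = c' 0 ->
  0 < s' <= s -> s <= S -> 0 < t' <= t -> t <= T ->
  cmp_angle d c c' s' t' <= cmp_angle d c c' s t.
Proof.
  intros Hc Hc' H0 Hs' HsS Ht' HtT.
  assert (Hdiv : forall a b u v w, 0 < u -> 0 < v -> 0 < w -> v * a <= u * b ->
            a / (2 * u * w) <= b / (2 * v * w)).
  { intros a b u v w Hu Hv Hw Hab.
    replace (a / (2 * u * w)) with ((v * a) / (2 * u * v * w)) by (field; repeat split; lra).
    replace (b / (2 * v * w)) with ((u * b) / (2 * u * v * w)) by (field; repeat split; lra).
    apply Rmult_le_compat_r; [|lra].
    apply Rlt_le, Rinv_0_lt_compat. apply Rmult_lt_0_compat; [|lra]. nra. }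
  unfold cmp_angle. apply acos_antitone.
  assert (Dt' : d (c 0) (c' t') = t')
    by (rewrite H0; apply (dist_segment_origin c' T); [assumption|lra]).
  assert (Ds : d (c' 0) (c s) = s)
    by (rewrite <- H0; apply (dist_segment_origin c S); [assumption|lra]).
  pose proof (cn_monotone c S (c' t') t' s' s Hc Dt' Hs' HsS) as Hmono_s.
  pose proof (cn_monotone c' T (c s) s t' t Hc' Ds Ht' HtT) as Hmono_t.
  rewrite (dist_sym (c' t) (c s)), (dist_sym (c' t') (c s)) in Hmono_t.
  apply Rle_trans with ((s ^ 2 + t' ^ 2 - d (c s) (c' t') ^ 2) / (2 * s * t')).
  - replace (2 * s * t) with (2 * t * s) by ring.
    replace (2 * s * t') with (2 * t' * s) by ring.
    apply Hdiv; lra.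
  - apply Hdiv; lra.
Qed.

Lemma alex_angle_le_cmp_angle c c' S T s t :
  geodesic_segment d c 0 S -> geodesic_segment d c' 0 T -> c 0 = c' 0 ->
  0 < s <= S -> 0 < t <= T -> alex_angle d c c' <= cmp_angle d c c' s t.
Proof.
  intros Hc Hc' H0 Hs Ht.
  destruct (alex_angle_spec c c') as [_ [Hinf _]].
  set (delta := Rmin s t).
  assert (Hdelta : 0 < delta) by (apply Rmin_glb_lt; lra).
  assert (delta <= s) by apply Rmin_l. assert (delta <= t) by apply Rmin_r.
  apply Rle_trans with (sup_cmp d c c' delta); [now apply Hinf|].
  apply (sup_cmp_spec c c' delta Hdelta). intros s1 t1 Hs1 Ht1.
  apply (cmp_angle_monotone c c' S T); lra || assumption.
Qed.

Lemma geodesic_line_shift (a : R -> X) t0 :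
  geodesic_line d a -> geodesic_line d (fun t => a (t0 + t)).
Proof. intros ha u v. rewrite ha. f_equal. ring. Qed.

Lemma geodesic_line_reflect (a : R -> X) t0 :
  geodesic_line d a -> geodesic_line d (fun t => a (t0 - t)).
Proof. intros ha u v. rewrite ha, <- Rabs_Ropp. f_equal. ring. Qed.

(* Comparison angles dominate the Alexandrov angle and grow with the distances,
   so the bound persists beyond the germ [c] along its extension [c']. *)
Lemma dist_sq_ge_of_alex_angle_ge xi c c' eps th :
  geodesic_line d xi -> geodesic_line d c' -> 0 < eps -> geodesic_segment d c 0 eps ->
  (forall u, 0 <= u <= eps -> c' u = c u) -> xi 0 = c 0 ->
  0 < th <= PI -> th <= alex_angle d xi c ->
  forall s r, 0 < s -> 0 < r -> s^2 + r^2 - 2 * s * r * cos th <= (d (xi s) (c' r))^2.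
Proof.
  intros Hxi Hc' Heps Hc Hext H0 Hth Hangle s r Hs Hr.
  apply dist_sq_ge_of_angle_ge; try lra.
  set (r' := Rmin r eps).
  assert (0 < r') by (apply Rmin_glb_lt; lra).
  assert (r' <= r) by apply Rmin_l. assert (r' <= eps) by apply Rmin_r.
  assert (Hcmp : cmp_angle d xi c s r' = cmp_angle d xi c' s r')
    by (unfold cmp_angle; rewrite Hext by lra; reflexivity).
  apply Rle_trans with (cmp_angle d xi c s r').
  - apply Rle_trans with (alex_angle d xi c); [assumption|].
    apply (alex_angle_le_cmp_angle xi c s eps); try lra; try assumption.
    apply geodesic_line_segment; [assumption|lra].
  - rewrite Hcmp. apply (cmp_angle_monotone xi c' s r); try lra;
      try (apply geodesic_line_segment; [assumption|lra]).
    rewrite H0, Hext by lra. reflexivity.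
Qed.

Lemma geod_from_extend (hgc : geodesically_complete d) x c :
  geod_from d x c -> exists c', geodesic_line d c' /\ c' 0 = x /\
  exists eps, 0 < eps /\ geodesic_segment d c 0 eps /\ forall t, 0 <= t <= eps -> c' t = c t.
Proof.
  intros [H0 [eps [Heps Hc]]].
  destruct (hgc c 0 eps Heps Hc) as [c' [Hc' Hext]].
  exists c'. split; [assumption|]. split; [rewrite Hext by lra; assumption|].
  now exists eps.
Qed.

(* Two germs at angle [ep] cannot both be close to a third one [c]: comparing at
   small equal distances [s], the triangle inequality gives
   [2 s^2 (1 - cos ep) <= d(e1 s, e2 s)^2 <= 2 (d(c s, e1 s)^2 + d(c s, e2 s)^2)]. *)
Lemma alex_angle_ge_either x c e1 e2 ep :
  geod_from d x e1 -> geod_from d x e2 -> 0 < ep <= PI -> ep <= alex_angle d e1 e2 ->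
  acos ((3 + cos ep) / 4) <= alex_angle d c e1 \/ acos ((3 + cos ep) / 4) <= alex_angle d c e2.
Proof.
  intros [E10 [eps1 [Heps1 S1]]] [E20 [eps2 [Heps2 S2]]] Hep Hsep.
  pose proof (COS_bound ep).
  set (th := acos ((3 + cos ep) / 4)).
  assert (Hth : 0 <= th <= PI) by apply acos_bound.
  assert (Hcth : cos th = (3 + cos ep) / 4) by (apply cos_acos; lra).
  apply NNPP. intros Hnone. apply not_or_and in Hnone as [Hn1 Hn2].
  apply Rnot_le_lt in Hn1, Hn2.
  destruct (cmp_angle_lt_of_alex_angle_lt _ _ _ Hn1) as [dl1 [Hdl1 C1]].
  destruct (cmp_angle_lt_of_alex_angle_lt _ _ _ Hn2) as [dl2 [Hdl2 C2]].
  set (s := Rmin (Rmin dl1 dl2) (Rmin eps1 eps2) / 2).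
  assert (Hs : 0 < s /\ s < dl1 /\ s < dl2 /\ s < eps1 /\ s < eps2).
  { unfold s. pose proof (Rmin_l dl1 dl2). pose proof (Rmin_r dl1 dl2).
    pose proof (Rmin_l eps1 eps2). pose proof (Rmin_r eps1 eps2).
    pose proof (Rmin_l (Rmin dl1 dl2) (Rmin eps1 eps2)).
    pose proof (Rmin_r (Rmin dl1 dl2) (Rmin eps1 eps2)).
    assert (0 < Rmin (Rmin dl1 dl2) (Rmin eps1 eps2))
      by (repeat apply Rmin_glb_lt; lra).
    lra. }
  assert (K1 := C1 s s ltac:(lra) ltac:(lra)).
  assert (K2 := C2 s s ltac:(lra) ltac:(lra)).
  assert (K3 : alex_angle d e1 e2 <= cmp_angle d e1 e2 s s)
    by (apply (alex_angle_le_cmp_angle e1 e2 eps1 eps2); lra || congruence).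
  unfold cmp_angle in K1, K2, K3.
  apply dist_sq_lt_of_angle_lt in K1, K2; try lra.
  pose proof (dist_sq_ge_of_angle_ge s s (d (e1 s) (e2 s)) ep ltac:(lra) ltac:(lra) Hep
                ltac:(lra)) as K4.
  rewrite Hcth in K1, K2.
  pose proof (dist_triangle (e1 s) (c s) (e2 s)) as T.
  rewrite (dist_sym (e1 s) (c s)) in T.
  pose proof (dist_ge0 (c s) (e1 s)). pose proof (dist_ge0 (c s) (e2 s)).
  pose proof (dist_ge0 (e1 s) (e2 s)).
  set (A1 := d (c s) (e1 s)) in *. set (A2 := d (c s) (e2 s)) in *.
  set (A3 := d (e1 s) (e2 s)) in *.
  assert (A3^2 <= (A1 + A2)^2) by (apply pow_incr; lra).
  assert (0 <= (A1 - A2)^2) by apply pow2_ge_0.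
  lra.
Qed.

(* A line [eta] issuing from [a t0] whose angle with the forward ray of [a] is
   at least [acos (be - 1)] (nearly [PI] for small [be]) and whose angle with
   the backward ray is at least [acos (1 - th)], in comparison form. *)
Definition branching_line (a : R -> X) (th be t0 : R) (eta : R -> X) : Prop :=
  geodesic_line d eta /\ eta 0 = a t0 /\ forall s r, 0 < s -> 0 < r ->
    s^2 + r^2 + 2 * s * r * (1 - be) <= (d (a (t0 + s)) (eta r))^2 /\
    s^2 + r^2 - 2 * s * r * (1 - th) <= (d (a (t0 - s)) (eta r))^2.

(* Two inverse directions [e1 n], [e2 n] of the forward ray that stay apart are
   both at angle nearly [PI] from the forward ray, and by [alex_angle_ge_either]
   one of them stays at a definite angle from the backward ray. *)
Lemma exists_branching_line (hgc : geodesically_complete d) a t0 :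
  geodesic_line d a -> multiple_inverses d (a t0) (fun t => a (t0 + t)) ->
  exists th, 0 < th <= 1 /\ forall be, 0 < be < 1 -> exists eta, branching_line a th be t0 eta.
Proof.
  intros ha [e1 [e2 [[D1 _] [[D2 _] [L1 [L2 NL]]]]]].
  destruct (not_is_lim_seq_0 _ (fun n => proj1 (alex_angle_spec (e1 n) (e2 n))) NL)
    as [ep [Hep Hfreq]].
  pose proof PI2_1 as HPI.
  set (ep1 := Rmin ep 1).
  assert (Hep1 : 0 < ep1 <= 1) by (split; [apply Rmin_glb_lt; lra|apply Rmin_r]).
  assert (Hcos1 : cos ep1 < 1).
  { pose proof (cos_decreasing_1 0 ep1) as C. rewrite cos_0 in C. apply C; lra. }
  pose proof (COS_bound ep1) as Hcos_bnd.
  set (c0 := (3 + cos ep1) / 4).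
  set (th := acos c0).
  assert (Hth : 0 < th < PI) by (apply acos_bound_lt; unfold c0; lra).
  assert (Hcth : cos th = c0) by (apply cos_acos; unfold c0; lra).
  exists (1 - c0). split; [unfold c0; lra|].
  intros be Hbe.
  set (al := acos (-1 + be)).
  assert (Hal : 0 < al < PI) by (apply acos_bound_lt; lra).
  assert (Hcal : cos al = -1 + be) by (apply cos_acos; lra).
  destruct (is_lim_seq_eventually_gt _ _ al (proj2 Hal) L1) as [N1 HN1].
  destruct (is_lim_seq_eventually_gt _ _ al (proj2 Hal) L2) as [N2 HN2].
  destruct (Hfreq (Nat.max N1 N2)) as [n [Hn Hsep]].
  set (fwd := fun t => a (t0 + t)). set (bwd := fun t => a (t0 - t)).
  assert (Hbwd0 : bwd 0 = a t0) by (unfold bwd; f_equal; ring).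
  assert (Hfwd0 : fwd 0 = a t0) by (unfold fwd; f_equal; ring).
  assert (Hfar : exists e, geod_from d (a t0) e /\
                   al < alex_angle d fwd e /\ th <= alex_angle d bwd e).
  { destruct (alex_angle_ge_either (a t0) bwd (e1 n) (e2 n) ep1 (D1 n) (D2 n))
      as [Hfar|Hfar]; try lra.
    - apply Rle_trans with ep; [apply Rmin_l|assumption].
    - exists (e1 n). split; [apply D1|split; [apply HN1; lia|exact Hfar]].
    - exists (e2 n). split; [apply D2|split; [apply HN2; lia|exact Hfar]]. }
  destruct Hfar as [e [He [Hfwd Hbwd]]].
  destruct (geod_from_extend hgc _ _ He) as [eta [Heta [Heta0 [eps [Heps [Se Hext]]]]]].
  exists eta. split; [assumption|]. split; [assumption|].
  intros s r Hs Hr.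
  assert (He0 : e 0 = a t0) by apply He.
  split.
  - pose proof (dist_sq_ge_of_alex_angle_ge fwd e eta eps al
      (geodesic_line_shift a t0 ha) Heta Heps Se Hext ltac:(congruence) ltac:(lra)
      ltac:(lra) s r Hs Hr) as Hd.
    rewrite Hcal in Hd. unfold fwd in Hd. lra.
  - pose proof (dist_sq_ge_of_alex_angle_ge bwd e eta eps th
      (geodesic_line_reflect a t0 ha) Heta Heps Se Hext ltac:(congruence) ltac:(lra)
      Hbwd s r Hs Hr) as Hd.
    rewrite Hcth in Hd. unfold bwd in Hd. lra.
Qed.

(* CN inequality at distance [s] from [x'] on [x' y]: if the angle at [x] in
   the triangle [x x' y] is nearly [PI], then [x] is close to that point. *)
Lemma dist_to_geodesic_le x x' y g s rho be :
  geodesic_segment d g 0 (d x' y) -> g 0 = x' -> g (d x' y) = y ->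
  d x x' = s -> d x y = rho -> 0 < s -> 0 < rho -> 0 <= be <= 1 ->
  s^2 + rho^2 + 2 * s * rho * (1 - be) <= (d x' y)^2 ->
  (d x (g s))^2 <= 2 * s^2 * be.
Proof.
  intros Hg Hg0 Hg1 Hs Hrho Hsp Hrhop Hbe Hobtuse.
  set (L := d x' y) in *.
  assert (HL0 : 0 <= L) by apply dist_ge0.
  assert (HLtri : L <= s + rho).
  { pose proof (dist_triangle x' x y) as T. rewrite (dist_sym x' x) in T. unfold L; lra. }
  assert (Hq : 0 <= 2 * s * rho * (1 - be)) by (apply Rmult_le_pos; nra).
  assert (HLrho : rho <= L) by (apply Rnot_lt_le; intro; nra).
  assert (HLs : s <= L) by (apply Rnot_lt_le; intro; nra).
  destruct hcat as [_ [_ CN]].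
  specialize (CN x x' y g Hg Hg0 Hg1 (s / L)).
  fold L in CN.
  assert (Hratio : 0 <= s / L <= 1).
  { split.
    - apply Rlt_le, Rdiv_lt_0_compat; lra.
    - apply (Rmult_le_reg_r L); [lra|]. field_simplify; lra. }
  specialize (CN Hratio).
  replace (s / L * L) with s in CN by (field; lra).
  rewrite Hs, Hrho in CN.
  set (e := d x (g s)) in *.
  assert (HCN : L * e^2 <= s * (rho^2 - (L - s)^2)).
  { apply (Rmult_le_compat_l L) in CN; [|lra].
    replace (L * ((1 - s / L) * s ^ 2 + s / L * rho ^ 2 - s / L * (1 - s / L) * L ^ 2))
      with (s * (rho^2 - (L - s)^2)) in CN by (field; lra).
    exact CN. }
  assert (HLs2 : rho^2 - 2 * s * rho * be <= (L - s)^2) by nra.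
  assert (s * (rho^2 - (L - s)^2) <= s * (2 * s * rho * be))
    by (apply Rmult_le_compat_l; lra).
  assert (rho * (2 * s^2 * be) <= L * (2 * s^2 * be))
    by (apply Rmult_le_compat_r; nra).
  apply (Rmult_le_reg_l L); nra.
Qed.

(* Take [x = a t0], [x' = a t1], [y = eta rho], [y' = eta' rho] and the point
   [z] at distance [s = t1 - t0] from [x'] on [x' y].  By the lemma above [z]
   is within [s th / 4] of [x], so the angle at [x'] between [z] and [y'] is
   still about [acos (1 - th)], and monotonicity of comparison angles at [x']
   transfers this to [y] and [y']. *)
Lemma branching_lines_separated a th t0 t1 rho eta eta' :
  geodesic_line d a -> 0 < th <= 1 ->
  branching_line a th (th^2 / 32) t0 eta -> branching_line a th (th^2 / 32) t1 eta' ->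
  t0 < t1 -> t1 - t0 <= rho ->
  rho^2 * th <= (d (eta rho) (eta' rho))^2.
Proof.
  intros ha Hth [Heta [Heta0 Hbr]] [Heta' [Heta'0 Hbr']] Ht Hrho.
  set (s := t1 - t0) in *.
  assert (Hs : 0 < s) by (unfold s; lra).
  destruct (Hbr s rho Hs ltac:(lra)) as [Hfwd _].
  destruct (Hbr' s rho Hs ltac:(lra)) as [_ Hbwd].
  replace (t0 + s) with t1 in Hfwd by (unfold s; ring).
  replace (t1 - s) with t0 in Hbwd by (unfold s; ring).
  assert (Dxx' : d (a t0) (a t1) = s) by (rewrite ha, Rabs_left1; unfold s; lra).
  assert (Dxy : d (a t0) (eta rho) = rho)
    by (rewrite <- Heta0, Heta, Rabs_left1; lra).
  assert (Dx'y' : d (a t1) (eta' rho) = rho)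
    by (rewrite <- Heta'0, Heta', Rabs_left1; lra).
  set (x := a t0) in *. set (x' := a t1) in *.
  set (y := eta rho) in *. set (y' := eta' rho) in *.
  destruct (proj1 (proj2 hcat) x' y) as [g [Hg [Hg0 Hg1]]].
  set (L := d x' y) in *.
  assert (0 <= L) by apply dist_ge0.
  assert (0 <= 2 * s * rho * (1 - th^2 / 32)) by (apply Rmult_le_pos; nra).
  assert (HLrho : rho <= L) by (apply Rnot_lt_le; intro; nra).
  assert (He : d x (g s) <= s * th / 4).
  { pose proof (dist_to_geodesic_le x x' y g s rho (th^2 / 32) Hg Hg0 Hg1 Dxx' Dxy Hs
                  ltac:(lra) ltac:(split; nra) Hfwd) as He2.
    pose proof (dist_ge0 x (g s)).
    apply Rnot_lt_le. intro.
    assert (0 < (d x (g s) - s * th / 4) * (d x (g s) + s * th / 4))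
      by (apply Rmult_lt_0_compat; nra).
    nra. }
  assert (Hz : s^2 + rho^2 - 2 * s * rho * (1 - th / 2) <= (d (g s) y')^2).
  { pose proof (dist_triangle x (g s) y') as T1.
    pose proof (dist_triangle x x' y') as T2. rewrite Dxx', Dx'y' in T2.
    pose proof (dist_ge0 x (g s)). pose proof (dist_ge0 x y'). pose proof (dist_ge0 (g s) y').
    set (e := d x (g s)) in *. set (d1 := d (g s) y') in *. set (d2 := d x y') in *.
    assert (Hd1 : d2^2 - 2 * e * d2 <= d1^2).
    { destruct (Rle_lt_dec d2 e).
      - assert (d2 * (d2 - 2 * e) <= 0) by (apply Rmult_le_0_l; lra). nra.
      - assert ((d2 - e)^2 <= d1^2) by (apply pow_incr; lra). nra. }
    assert (e * d2 <= s * th / 4 * (s + rho)) by (apply Rmult_le_compat; lra).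
    assert (0 <= s * th * (rho - s)) by (apply Rmult_le_pos; nra).
    nra. }
  assert (Dg0y' : d (g 0) y' = rho) by (rewrite Hg0; exact Dx'y').
  pose proof (cn_monotone g L y' rho s L Hg Dg0y' ltac:(lra) (Rle_refl L)) as Hmono.
  rewrite Hg1 in Hmono.
  assert (Hcos : s * (L^2 + rho^2 - (d y y')^2) <= s * (2 * L * rho * (1 - th / 2)))
    by nra.
  apply Rmult_le_reg_l in Hcos; [|lra].
  assert (rho * rho * th <= L * rho * th) by (apply Rmult_le_compat_r; nra).
  nra.
Qed.

Lemma branching_line_weaken a th th' be t0 eta : th' <= th ->
  branching_line a th be t0 eta -> branching_line a th' be t0 eta.
Proof.
  intros Hth [Heta [Heta0 Hbr]]. split; [assumption|]. split; [assumption|].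
  intros s r Hs Hr. destruct (Hbr s r Hs Hr) as [Hfwd Hbwd]. split; [assumption|].
  assert (0 <= 2 * s * r) by nra. nra.
Qed.

Definition branch_point (a : R -> X) (k : nat) (t : R) : Prop :=
  exists eta, branching_line a (/ INR (S k)) ((/ INR (S k))^2 / 32) t eta.

Lemma omega_plus_branch_point (hgc : geodesically_complete d) a x :
  geodesic_line d a -> omega_plus d a x -> exists t, (exists k, branch_point a k t) /\ a t = x.
Proof.
  intros ha [t0 [-> Hinv]].
  destruct (exists_branching_line hgc a t0 ha Hinv) as [th [Hth Hbr]].
  destruct (archimed_cor1 th (proj1 Hth)) as [N [HN HN0]].
  destruct N as [|k]; [lia|].
  pose proof (inv_INR_S_bounds k).
  destruct (Hbr ((/ INR (S k))^2 / 32) ltac:(split; nra)) as [eta Heta].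
  exists t0. split; [|reflexivity].
  exists k, eta. apply (branching_line_weaken a th); [lra|assumption].
Qed.

(* Infinitely many branch points [u n] near [t] would give points [eta_n rho]
   in a compact ball around [a t] that are pairwise at least [rho * sqrt th]
   apart, by [branching_lines_separated]. *)
Lemma branch_point_isolated (hlc : locally_compact d) a k t :
  geodesic_line d a -> isolated_in (branch_point a k) t.
Proof.
  intros ha.
  set (th := / INR (S k)). pose proof (inv_INR_S_bounds k) as Hth. fold th in Hth.
  destruct (hlc (a t)) as [r [Hr Hcomp]].
  apply NNPP. intros Hnot.
  destruct (not_isolated_sequence _ _ Hnot (r / 4) ltac:(lra)) as [u [Hu Hinj]].
  set (rho := r / 2).
  set (eta := fun n => epsilon (inhabits a) (branching_line a th (th^2 / 32) (u n))).
  assert (Heta : forall n, branching_line a th (th^2 / 32) (u n) (eta n))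
    by (intros n; apply epsilon_spec, (Hu n)).
  set (y := fun n => eta n rho).
  assert (Hball : forall n, d (a t) (y n) <= r).
  { intros n. destruct (Heta n) as [Hl [H0 _]]. destruct (Hu n) as [_ Hn].
    assert (Hy : d (a (u n)) (y n) = rho)
      by (unfold y; rewrite <- H0, Hl, Rabs_left1; unfold rho; lra).
    pose proof (dist_triangle (a t) (a (u n)) (y n)) as T.
    rewrite Hy, ha, Rabs_minus_sym in T. unfold rho in T. lra. }
  destruct (Hcomp y Hball) as [phi [Y [Hphi [_ Hlim]]]].
  apply is_lim_seq_spec in Hlim.
  destruct (Hlim (mkposreal (rho * th / 4) ltac:(unfold rho; simpl; nra))) as [N HN].
  assert (HN1 := HN N (le_n N)). assert (HN2 := HN (S N) (le_S _ _ (le_n N))).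
  simpl in HN1, HN2. rewrite Rminus_0_r, Rabs_pos_eq in HN1, HN2 by apply dist_ge0.
  set (i := phi N) in *. set (j := phi (S N)) in *.
  assert (Hclose : d (y i) (y j) < rho * th / 2).
  { pose proof (dist_triangle (y i) Y (y j)) as T. rewrite (dist_sym Y (y j)) in T. lra. }
  assert (Hsep : rho^2 * th <= (d (y i) (y j))^2).
  { destruct (Hu i) as [_ Hi]. destruct (Hu j) as [_ Hj].
    apply Rabs_lt_between in Hi, Hj.
    destruct (Rtotal_order (u i) (u j)) as [Hlt|[Heq|Hgt]].
    - apply (branching_lines_separated a th (u i) (u j)); unfold rho in *; lra || auto.
    - exfalso. apply (Hinj i j (Hphi N) Heq).
    - rewrite dist_sym.
      apply (branching_lines_separated a th (u j) (u i)); unfold rho in *; lra || auto. }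
  pose proof (dist_ge0 (y i) (y j)).
  assert (0 < rho) by (unfold rho; lra).
  assert (0 < (rho * th / 2 - d (y i) (y j)) * (rho * th / 2 + d (y i) (y j)))
    by (apply Rmult_lt_0_compat; nra).
  assert (rho^2 * th^2 <= rho^2 * th) by (apply Rmult_le_compat_l; nra).
  nra.
Qed.

Lemma at_most_countable_omega_plus (hgc : geodesically_complete d)
  (hlc : locally_compact d) a :
  geodesic_line d a -> at_most_countable (omega_plus d a).
Proof.
  intros ha.
  apply (at_most_countable_sub _ (fun x => exists t, (exists k, branch_point a k t) /\ a t = x)).
  - intros x Hx. now apply omega_plus_branch_point.
  - apply at_most_countable_image, at_most_countable_bigcup. intros k.
    apply at_most_countable_isolated. intros t _.
    now apply branch_point_isolated.
Qed.

End CAT0_space.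

Lemma omega_minus_reflect {X} (d : X -> X -> R) a x :
  omega_minus d a x -> omega_plus d (fun t => a (- t)) x.
Proof.
  intros [t0 [Hx Hinv]]. exists (- t0). split.
  - now rewrite Ropp_involutive.
  - replace (fun t => a (- (- t0 + t))) with (fun t => a (t0 - t)); [assumption|].
    apply functional_extensionality. intros t. f_equal. ring.
Qed.

Theorem theorem7 (X : Type) (d : X -> X -> R)
  (hcat : CAT0 d) (hgc : geodesically_complete d) (hlc : locally_compact d)
  (a : R -> X) (ha : geodesic_line d a) :
  at_most_countable (omega_plus d a) /\ at_most_countable (omega_minus d a).
Proof.
  split.
  - now apply at_most_countable_omega_plus.
  - apply (at_most_countable_sub _ (omega_plus d (fun t => a (- t)))).
    + apply omega_minus_reflect.
    + apply at_most_countable_omega_plus; try assumption.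
      replace (fun t => a (- t)) with (fun t => a (0 - t))
        by (apply functional_extensionality; intros t; f_equal; ring).
      now apply geodesic_line_reflect.
Qed.
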